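(* Let $\varepsilon>0$ and let $N\ge1$ be an integer; set $\delta(\varepsilon,N):=\varepsilon^4/(16N^8n^4)$. Let $\Lambda\in\mathbb{R}^{p\times p}$ be a connected discrete-time interconnection, $r\in\mathbb{R}^p$ with $r^T\Lambda=r^T$, $r^T\mathbf 1=1$, and $\Omega$ symmetric positive definite with $(\Lambda-\mathbf 1r^T)^T\Omega(\Lambda-\mathbf 1r^T)-\Omega=-I_p$. Let $\rho(\Lambda):=\sigma_{\max}(\Omega)\max\{1,|\Lambda-I_p|^2\}$ and $V(\mathbf x):=\mathbf x^T(\Omega\otimes I_n)\mathbf x$. Then for every $Q:\mathbb{N}\to\overline{\mathcal Q}_n$ with $\sigma_{\min}\big(\sum_{k=0}^{N-1}Q_k\big)\ge\varepsilon$, the solution of $\mathbf x^+=(I_{np}+(\Lambda-I_p)\otimes Q_k)\mathbf x$ satisfies $$V(\mathbf x(N)-\bar{\mathbf x})\le\Big(1-\frac{\delta(\varepsilon,N)}{\rho(\Lambda)}\Big)V(\mathbf x(0)-\bar{\mathbf x}),$$ where $\bar{\mathbf x}:=(\mathbf 1r^T\otimes I_n)\mathbf x(0)$.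
   Context: $|\cdot|$ Euclidean / induced 2-norm; $\mathbf 1$ all-ones vector; $\otimes$ Kronecker product; $\sigma_{\max},\sigma_{\min}$ largest/smallest singular value; $\overline{\mathcal Q}_n$ symmetric positive semidefinite $n\times n$ matrices $R$ with $|R|\le1$. Discrete-time interconnection: $\lambda_{ij}\ge0$, $\sum_j\lambda_{ij}=1$; graph edge $(n_i,n_j)$ iff $\lambda_{ij}>0$; connected if some node is reachable by a directed path from every other node. *)

From HB Require Import structures.
From mathcomp Require Import all_boot all_order all_algebra.
From mathcomp Require Import mxtens.
From mathcomp Require Import all_classical all_reals.
Set Implicit Arguments. Unset Strict Implicit. Unset Printing Implicit Defensive.
Import Order.TTheory GRing.Theory Num.Theory.
Local Open Scope classical_set_scope.
Local Open Scope ring_scope.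

Section Defs.
Variable R : realType.

Definition vnorm {m : nat} (x : 'cV[R]_m) : R := Num.sqrt (\sum_i (x i 0) ^+ 2).

(* induced 2-norm = largest singular value *)
Definition opnorm {m k : nat} (A : 'M[R]_(m, k)) : R :=
  sup [set vnorm (A *m x) | x in [set x : 'cV[R]_k | vnorm x = 1]].
Definition sigma_max {m k : nat} (A : 'M[R]_(m, k)) : R := opnorm A.
Definition sigma_min {m : nat} (A : 'M[R]_m) : R :=
  inf [set vnorm (A *m x) | x in [set x : 'cV[R]_m | vnorm x = 1]].

Definition qform {m : nat} (A : 'M[R]_m) (x : 'cV[R]_m) : R := (x^T *m A *m x) 0 0.

Definition symmetric {m : nat} (A : 'M[R]_m) : Prop := A^T = A.
Definition posdef {m : nat} (A : 'M[R]_m) : Prop :=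
  symmetric A /\ forall x : 'cV[R]_m, x != 0 -> 0 < qform A x.
Definition psd {m : nat} (A : 'M[R]_m) : Prop :=
  symmetric A /\ forall x : 'cV[R]_m, 0 <= qform A x.
Definition Qbar {m : nat} (A : 'M[R]_m) : Prop := psd A /\ opnorm A <= 1.

Definition ones (m : nat) : 'cV[R]_m := const_mx 1.

Definition interconnection {p : nat} (L : 'M[R]_p) : Prop :=
  (forall i j, 0 <= L i j) /\ (forall i, \sum_j L i j = 1).
Definition edge {p : nat} (L : 'M[R]_p) : rel 'I_p := fun i j => 0 < L i j.
Definition connected_ic {p : nat} (L : 'M[R]_p) : Prop :=
  interconnection L /\ exists k : 'I_p, forall i, connect (edge L) i k.

Fixpoint traj {p n : nat} (L : 'M[R]_p) (Q : nat -> 'M[R]_n)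
    (x0 : 'cV[R]_(p * n)) (k : nat) : 'cV[R]_(p * n) :=
  match k with
  | 0 => x0
  | k'.+1 => (1%:M + tensmx (L - 1%:M) (Q k')) *m traj L Q x0 k'
  end.

Definition Vfun {p n : nat} (Om : 'M[R]_p) (x : 'cV[R]_(p * n)) : R :=
  qform (tensmx Om (1%:M : 'M[R]_n)) x.

Definition delta (eps : R) (N n : nat) : R :=
  eps ^+ 4 / (16 * N%:R ^+ 8 * n%:R ^+ 4).

Definition rho {p : nat} (L Om : 'M[R]_p) : R :=
  sigma_max Om * Num.max 1 (opnorm (L - 1%:M) ^+ 2).

End Defs.

From Pilot Require Import Defs.
From HB Require Import structures.
From mathcomp Require Import all_boot all_order all_algebra.
From mathcomp Require Import mxtens.
From mathcomp Require Import all_classical all_reals.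
From mathcomp Require Import ring lra zify.
Set Implicit Arguments. Unset Strict Implicit. Unset Printing Implicit Defensive.
Import Order.TTheory GRing.Theory Num.Theory.
Local Open Scope ring_scope.

(* Write the error x(k) - xbar as the p x n matrix E_k whose rows are the errors of the
   agents.  Then E_(k+1) = E_k + (L - I) E_k Q_k and r^T E_k = 0, so L - I acts on E_k as
   H = L - 1 r^T - I, and the Lyapunov equation for L - 1 r^T gives
   V(E_(k+1)) <= V(E_k) - tr(E_k Q_k E_k^T): the discarded term is the trace of the product
   of the psd matrices (H E_k)^T Om (H E_k) and Q_k - Q_k^2.  Over the horizon V therefore
   drops by the total dissipation S.  Conversely, persistency of excitation gives
   eps^2 |E_0|^2 <= N tr(E_0 (sum_k Q_k) E_0^T), where each tr(E_0 Q_k E_0^T) is at most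
   2 tr(E_k Q_k E_k^T) + 2 |E_0 - E_k|^2 and |E_0 - E_k|^2 <= N |L - I|^2 S.  Hence
   eps^2 |E_0|^2 <= 4 N^3 max(1, |L - I|^2) S, which together with
   V(E_0) <= sigma_max(Om) |E_0|^2 and delta * 4 N^3 <= eps^2 is the claimed contraction. *)

Section FrobeniusProduct.
Variable R : realFieldType.

Definition mxdot {a b : nat} (X Y : 'M[R]_(a, b)) : R := \tr (X^T *m Y).

Lemma mxdotC {a b} (X Y : 'M[R]_(a, b)) : mxdot X Y = mxdot Y X.
Proof. by rewrite /mxdot -mxtrace_tr trmx_mul trmxK. Qed.

Lemma mxdotDr {a b} (X Y Z : 'M[R]_(a, b)) : mxdot X (Y + Z) = mxdot X Y + mxdot X Z.
Proof. by rewrite /mxdot mulmxDr mxtraceD. Qed.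

Lemma mxdotZr {a b} c (X Y : 'M[R]_(a, b)) : mxdot X (c *: Y) = c * mxdot X Y.
Proof. by rewrite /mxdot -scalemxAr mxtraceZ. Qed.

Lemma mxdotNr {a b} (X Y : 'M[R]_(a, b)) : mxdot X (- Y) = - mxdot X Y.
Proof. by rewrite -scaleN1r mxdotZr mulN1r. Qed.

Lemma mxdotBr {a b} (X Y Z : 'M[R]_(a, b)) : mxdot X (Y - Z) = mxdot X Y - mxdot X Z.
Proof. by rewrite mxdotDr mxdotNr. Qed.

Lemma mxdotDl {a b} (X Y Z : 'M[R]_(a, b)) : mxdot (Y + Z) X = mxdot Y X + mxdot Z X.
Proof. by rewrite mxdotC mxdotDr !(mxdotC X). Qed.

Lemma mxdotZl {a b} c (X Y : 'M[R]_(a, b)) : mxdot (c *: Y) X = c * mxdot Y X.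
Proof. by rewrite mxdotC mxdotZr mxdotC. Qed.

Lemma mxdotNl {a b} (X Y : 'M[R]_(a, b)) : mxdot (- Y) X = - mxdot Y X.
Proof. by rewrite mxdotC mxdotNr mxdotC. Qed.

Lemma mxdotBl {a b} (X Y Z : 'M[R]_(a, b)) : mxdot (Y - Z) X = mxdot Y X - mxdot Z X.
Proof. by rewrite mxdotDl mxdotNl. Qed.

Lemma mxdot0r {a b} (X : 'M[R]_(a, b)) : mxdot X 0 = 0.
Proof. by rewrite /mxdot mulmx0 linear0. Qed.

Lemma mxdot_sumr {a b} (X : 'M[R]_(a, b)) k (F : 'I_k -> 'M[R]_(a, b)) :
  mxdot X (\sum_(j < k) F j) = \sum_(j < k) mxdot X (F j).
Proof. by rewrite /mxdot mulmx_sumr raddf_sum. Qed.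

Lemma mxdot_mull {a b c} (A : 'M[R]_(c, a)) (X : 'M[R]_(a, b)) Y :
  mxdot (A *m X) Y = mxdot X (A^T *m Y).
Proof. by rewrite /mxdot trmx_mul mulmxA. Qed.

Lemma mxdot_mulr {a b c} (B : 'M[R]_(b, c)) (X : 'M[R]_(a, b)) Y :
  mxdot (X *m B) Y = mxdot X (Y *m B^T).
Proof. by rewrite /mxdot trmx_mul -mulmxA mxtrace_mulC mulmxA. Qed.

Lemma mxdotE {a b} (X Y : 'M[R]_(a, b)) : mxdot X Y = \sum_i \sum_j X i j * Y i j.
Proof.
rewrite /mxdot /mxtrace exchange_big /=; apply: eq_bigr => j _.
by rewrite mxE; apply: eq_bigr => i _; rewrite mxE.
Qed.

Lemma mxdot_cols {a b} (X Y : 'M[R]_(a, b)) :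
  mxdot X Y = \sum_j mxdot (col j X) (col j Y).
Proof.
rewrite mxdotE exchange_big /=; apply: eq_bigr => j _.
by rewrite mxdotE; apply: eq_bigr => i _; rewrite big_ord1 !mxE.
Qed.

Lemma mxdot_ge0 {a b} (X : 'M[R]_(a, b)) : 0 <= mxdot X X.
Proof.
by rewrite mxdotE; apply: sumr_ge0 => i _; apply: sumr_ge0 => j _; rewrite -expr2 sqr_ge0.
Qed.

Lemma mxdot_eq0 {a b} (X : 'M[R]_(a, b)) : mxdot X X = 0 -> X = 0.
Proof.
have sq_ge0 (x : R) : 0 <= x * x by rewrite -expr2 sqr_ge0.
rewrite mxdotE => /eqP; rewrite psumr_eq0 => [/allP X0|i _]; last exact: sumr_ge0.
apply/matrixP => i j; rewrite mxE; move/implyP: (X0 i (mem_index_enum i)).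
rewrite psumr_eq0 // => /(_ isT)/allP/(_ j (mem_index_enum j))/implyP/(_ isT).
by rewrite -expr2 sqrf_eq0 => /eqP.
Qed.

End FrobeniusProduct.

Section CauchySchwarz.
Variable R : realFieldType.

Lemma quadratic_ge0_discr (a b c : R) :
  0 <= a -> (forall t, 0 <= a * t ^+ 2 + 2 * b * t + c) -> b ^+ 2 <= a * c.
Proof.
move=> a_ge0 q_ge0; have [a0|a_neq0] := eqVneq a 0.
  have [->|b_neq0] := eqVneq b 0; first by rewrite a0 mul0r expr0n.
  have := q_ge0 (- (c + 1) / (2 * b)); rewrite a0.
  suff -> : 0 * (- (c + 1) / (2 * b)) ^+ 2 + 2 * b * (- (c + 1) / (2 * b)) + c = -1.
    by rewrite lerNr oppr0 ler10.
  by field; rewrite b_neq0.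
have a_gt0 : 0 < a by rewrite lt_def a_neq0.
rewrite -subr_ge0; have := q_ge0 (- b / a); rewrite -(ler_pM2l a_gt0) mulr0.
by congr (_ <= _); field; rewrite a_neq0.
Qed.

Lemma cauchy_schwarz_form (V : lmodType R) (B : V -> V -> R) :
  (forall x y, B x y = B y x) ->
  (forall c x y z, B (c *: x + y) z = c * B x z + B y z) ->
  (forall x, 0 <= B x x) ->
  forall x y, B x y ^+ 2 <= B x x * B y y.
Proof.
move=> BC Bl B_ge0 x y; apply: quadratic_ge0_discr => // t.
have := B_ge0 (t *: x + y); rewrite Bl BC Bl (BC y (t *: x + y)) Bl (BC y x).
by congr (_ <= _); ring.
Qed.

Lemma mxdot_cauchy_schwarz {a b} (X Y : 'M[R]_(a, b)) :
  mxdot X Y ^+ 2 <= mxdot X X * mxdot Y Y.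
Proof.
apply: cauchy_schwarz_form; [exact: mxdotC | | exact: mxdot_ge0].
by move=> c U V W; rewrite mxdotDl mxdotZl.
Qed.

End CauchySchwarz.

Section PsdMatrices.
Variable R : realType.

Lemma qform_mxdot {m} (A : 'M[R]_m) x : qform A x = mxdot x (A *m x).
Proof. by rewrite /qform /mxdot trace_mx11 mulmxA. Qed.

Lemma posdef_psd {m} (A : 'M[R]_m) : posdef A -> psd A.
Proof.
move=> [A_sym A_pos]; split => // x.
have [->|x_neq0] := eqVneq x 0; last exact/ltW/A_pos.
by rewrite qform_mxdot mulmx0 mxdot0r.
Qed.

Lemma mxdot_rows {a b} (X : 'M[R]_(a, b)) (Q : 'M[R]_b) :
  mxdot X (X *m Q) = \sum_i qform Q (row i X)^T.
Proof.
rewrite mxdotE; apply: eq_bigr => i _; rewrite /qform trmxK !mxE.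
apply: eq_bigr => j _; rewrite !mxE mulrC; congr (_ * _).
by apply: eq_bigr => l _; rewrite !mxE.
Qed.

Lemma mxdot_trmx {a b} (X Y : 'M[R]_(a, b)) : mxdot X^T Y^T = mxdot X Y.
Proof. by rewrite /mxdot trmxK -mxtrace_tr trmx_mul trmxK mxtrace_mulC. Qed.

Lemma psd_mxdot_mulr_ge0 {a b} (X : 'M[R]_(a, b)) (Q : 'M[R]_b) :
  psd Q -> 0 <= mxdot X (X *m Q).
Proof. by move=> [_ Q_ge0]; rewrite mxdot_rows; apply: sumr_ge0. Qed.

Lemma psd_mxdot_mull_ge0 {a b} (S : 'M[R]_a) (X : 'M[R]_(a, b)) :
  psd S -> 0 <= mxdot X (S *m X).
Proof.
move=> S_psd; rewrite -mxdot_trmx trmx_mul.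
by case: (S_psd) => -> _; apply: psd_mxdot_mulr_ge0.
Qed.

Lemma psd_cauchy_schwarz {m} (S : 'M[R]_m) (x y : 'cV[R]_m) : psd S ->
  mxdot x (S *m y) ^+ 2 <= mxdot x (S *m x) * mxdot y (S *m y).
Proof.
move=> [S_sym S_ge0].
apply: (cauchy_schwarz_form (B := fun x y : 'cV[R]_m => mxdot x (S *m y))).
- by move=> u v; rewrite mxdotC mxdot_mull S_sym.
- by move=> c u v w; rewrite mxdotDl mxdotZl.
- by move=> u; rewrite -qform_mxdot.
Qed.

Lemma psd_congr {m k} (S : 'M[R]_m) (M : 'M[R]_(m, k)) :
  psd S -> psd (M^T *m S *m M).
Proof.
move=> S_psd; split; first by rewrite /Defs.symmetric !trmx_mul trmxK mulmxA (proj1 S_psd).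
by move=> v; rewrite qform_mxdot -!mulmxA -mxdot_mull; apply: psd_mxdot_mull_ge0.
Qed.

Lemma mxdot_delta {m} (i : 'I_m) (Y : 'cV[R]_m) :
  mxdot (delta_mx i (0 : 'I_1)) Y = Y i 0.
Proof. by rewrite /mxdot trmx_delta -rowE trace_mx11 mxE. Qed.

Lemma mxdot_delta_mul {m} (S : 'M[R]_m) (i j : 'I_m) :
  mxdot (delta_mx i (0 : 'I_1)) (S *m delta_mx j (0 : 'I_1)) = S i j.
Proof. by rewrite mxdot_delta -colE mxE. Qed.

Lemma psd_diag_ge0 {m} (S : 'M[R]_m) k : psd S -> 0 <= S k k.
Proof.
move=> [_ S_ge0]; have := S_ge0 (delta_mx k (0 : 'I_1)).
by rewrite qform_mxdot mxdot_delta_mul.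
Qed.

Lemma psd_diag_eq0 {m} (S : 'M[R]_m) (k j : 'I_m) : psd S -> S k k = 0 -> S k j = 0.
Proof.
move=> S_psd Skk0.
have := psd_cauchy_schwarz (delta_mx k (0 : 'I_1)) (delta_mx j (0 : 'I_1)) S_psd.
rewrite !mxdot_delta_mul Skk0 mul0r => Skj2_le0.
by apply/eqP; rewrite -sqrf_eq0 eq_le Skj2_le0 sqr_ge0.
Qed.

Lemma mxdot_mx11 (X Y : 'M[R]_1) : mxdot X Y = X 0 0 * Y 0 0.
Proof. by rewrite mxdotE !big_ord1. Qed.

(* One step of the LDL^T (Cholesky) elimination. *)
Lemma psd_sub_dyad {m} (S : 'M[R]_m) k : psd S -> 0 < S k k ->
  psd (S - (S k k)^-1 *: (col k S *m (col k S)^T)).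
Proof.
move=> S_psd Skk_gt0; have [S_sym _] := S_psd; split.
  by rewrite /Defs.symmetric linearB /= linearZ /= trmx_mul trmxK S_sym.
move=> v; rewrite qform_mxdot mulmxBl mxdotBr -scalemxAl mxdotZr -mulmxA.
rewrite -(trmxK (col k S)) -mxdot_mull trmxK mxdot_mx11.
have -> : ((col k S)^T *m v) 0 0 = mxdot (delta_mx k (0 : 'I_1)) (S *m v).
  by rewrite mxdot_delta !mxE; apply: eq_bigr => l _; rewrite !mxE -{1}S_sym mxE.
rewrite -expr2 subr_ge0 -(ler_pM2l Skk_gt0) mulrA mulfV ?gt_eqF // mul1r.
by have := psd_cauchy_schwarz (delta_mx k (0 : 'I_1)) v S_psd; rewrite mxdot_delta_mul.
Qed.

Lemma psd_ge0_dyads {m} (f : 'M[R]_m -> R) :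
  (forall A B, f (A + B) = f A + f B) -> (forall c A, f (c *: A) = c * f A) ->
  (forall b : 'cV[R]_m, 0 <= f (b *m b^T)) ->
  forall S, psd S -> 0 <= f S.
Proof.
move=> fD fZ f_dyad_ge0.
suff f_ge0 d S : psd S -> (forall i j : 'I_m, (d <= i)%N -> S i j = 0) -> 0 <= f S.
  by move=> S S_psd; apply: (f_ge0 m) => // i j; rewrite leqNgt ltn_ord.
elim: d S => [|d IHd] S S_psd S_rows0.
  have -> : S = 0 by apply/matrixP => i j; rewrite mxE S_rows0.
  by rewrite -(scale0r 0) fZ mul0r.
have [le_m_d|lt_d_m] := leqP m d.
  by apply: IHd => // i j le_d_i; have := ltn_ord i; lia.
pose k := Ordinal lt_d_m.
have [Skk0|Skk_neq0] := eqVneq (S k k) 0.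
  apply: IHd => // i j; rewrite leq_eqVlt => /orP[/eqP d_i|lt_d_i]; last exact: S_rows0.
  have -> : i = k by apply: val_inj.
  exact: psd_diag_eq0.
have Skk_gt0 : 0 < S k k by rewrite lt_def Skk_neq0 psd_diag_ge0.
rewrite -[S](subrK ((S k k)^-1 *: (col k S *m (col k S)^T))) fD fZ.
apply: addr_ge0; last by apply: mulr_ge0; [rewrite invr_ge0 ltW | exact: f_dyad_ge0].
apply: IHd; first exact: psd_sub_dyad.
move=> i j; rewrite leq_eqVlt => /orP[/eqP d_i|lt_d_i]; rewrite !mxE big_ord1 !mxE.
  have -> : i = k by apply: val_inj.
  have -> : S j k = S k j by rewrite -{1}(proj1 S_psd) mxE.
  by rewrite mulrA mulVf // mul1r subrr.
by rewrite (S_rows0 i j) // (S_rows0 i k) // mul0r mulr0 subrr.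
Qed.

Lemma mxtrace_mul_psd_ge0 {m} (A B : 'M[R]_m) : psd A -> psd B -> 0 <= \tr (A *m B).
Proof.
move=> [_ A_ge0]; apply: (psd_ge0_dyads (f := fun S => \tr (A *m S))) => [C D|c C|b].
- by rewrite mulmxDr mxtraceD.
- by rewrite -scalemxAr mxtraceZ.
- by rewrite mulmxA mxtrace_mulC mulmxA trace_mx11; apply: A_ge0.
Qed.

End PsdMatrices.

Section Norms.
Variable R : realType.
Local Open Scope classical_set_scope.

Lemma vnormE {m} (x : 'cV[R]_m) : vnorm x = Num.sqrt (mxdot x x).
Proof.
by rewrite /vnorm mxdotE; congr Num.sqrt; apply: eq_bigr => i _; rewrite big_ord1 expr2.
Qed.

Lemma vnorm_sqr {m} (x : 'cV[R]_m) : vnorm x ^+ 2 = mxdot x x.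
Proof. by rewrite vnormE sqr_sqrtr ?mxdot_ge0. Qed.

Lemma vnorm_ge0 {m} (x : 'cV[R]_m) : 0 <= vnorm x.
Proof. exact: sqrtr_ge0. Qed.

Lemma vnorm0 {m} : vnorm (0 : 'cV[R]_m) = 0.
Proof. by rewrite vnormE mxdot0r sqrtr0. Qed.

Lemma vnormZ {m} c (x : 'cV[R]_m) : vnorm (c *: x) = `|c| * vnorm x.
Proof. by rewrite !vnormE mxdotZl mxdotZr mulrA -expr2 sqrtrM ?sqr_ge0 // sqrtr_sqr. Qed.

Lemma vnorm_gt0 {m} (x : 'cV[R]_m) : x != 0 -> 0 < vnorm x.
Proof.
move=> x_neq0; rewrite vnormE sqrtr_gt0 lt_def mxdot_ge0 andbT.
by apply: contra x_neq0 => /eqP/mxdot_eq0 ->.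
Qed.

Lemma vnorm_normalize {m} (x : 'cV[R]_m) : x != 0 -> vnorm ((vnorm x)^-1 *: x) = 1.
Proof.
move=> x_neq0; have x_gt0 := vnorm_gt0 x_neq0.
by rewrite vnormZ ger0_norm ?invr_ge0 ?ltW // mulVf ?gt_eqF.
Qed.

Lemma mxdot_mulmx_le {m k} (A : 'M[R]_(m, k)) (x : 'cV[R]_k) :
  mxdot (A *m x) (A *m x) <= mxdot A A * mxdot x x.
Proof.
have Ax_row i : (A *m x) i 0 = mxdot (row i A)^T x.
  by rewrite mxdotE !mxE; apply: eq_bigr => j _; rewrite big_ord1 !mxE.
have row_sum : mxdot A A = \sum_i mxdot (row i A)^T (row i A)^T.
  rewrite mxdotE; apply: eq_bigr => i _; rewrite mxdotE.
  by apply: eq_bigr => j _; rewrite big_ord1 !mxE.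
rewrite row_sum mulr_suml mxdotE; apply: ler_sum => i _.
by rewrite big_ord1 -expr2 Ax_row; apply: mxdot_cauchy_schwarz.
Qed.

Lemma opnorm_has_ubound {m k} (A : 'M[R]_(m, k)) :
  has_ubound [set vnorm (A *m x) | x in [set x : 'cV[R]_k | vnorm x = 1]].
Proof.
exists (Num.sqrt (mxdot A A)) => _ [x /= x_unit <-].
rewrite vnormE ler_sqrt ?mxdot_ge0 //.
by rewrite -[mxdot A A]mulr1 -(expr1n _ 2) -x_unit vnorm_sqr mxdot_mulmx_le.
Qed.

Lemma opnorm_ge0 {m k} (A : 'M[R]_(m, k)) : 0 <= opnorm A.
Proof.
case: k A => [|k] A.
  rewrite /opnorm; suff -> : [set vnorm (A *m x) | x in [set x | vnorm x = 1]] = set0.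
    by rewrite sup0.
  apply/seteqP; split => // y [x /= x_unit _]; move: x_unit.
  by rewrite (flatmx0 x) vnorm0 => /eqP; rewrite eq_sym oner_eq0.
have e0_unit : vnorm (delta_mx 0 0 : 'cV[R]_k.+1) = 1.
  by rewrite vnormE mxdot_delta mxE !eqxx sqrtr1.
apply: le_trans (vnorm_ge0 (A *m delta_mx 0 0)) _.
by apply: (ub_le_sup (opnorm_has_ubound A)); exists (delta_mx 0 0).
Qed.

Lemma vnorm_mulmx_le {m k} (A : 'M[R]_(m, k)) x : vnorm (A *m x) <= opnorm A * vnorm x.
Proof.
have [->|x_neq0] := eqVneq x 0; first by rewrite mulmx0 !vnorm0 mulr0.
have x_gt0 := vnorm_gt0 x_neq0.
have : vnorm (A *m ((vnorm x)^-1 *: x)) <= opnorm A.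
  apply: (ub_le_sup (opnorm_has_ubound A)).
  by exists ((vnorm x)^-1 *: x) => //; apply: vnorm_normalize.
by rewrite -scalemxAr vnormZ ger0_norm ?invr_ge0 ?vnorm_ge0 // ler_pdivrMl // mulrC.
Qed.

Lemma sigma_min_le {m} (A : 'M[R]_m) x : sigma_min A * vnorm x <= vnorm (A *m x).
Proof.
have [->|x_neq0] := eqVneq x 0; first by rewrite mulmx0 !vnorm0 mulr0.
have x_gt0 := vnorm_gt0 x_neq0.
have : sigma_min A <= vnorm (A *m ((vnorm x)^-1 *: x)).
  apply: ge_inf; first by exists 0 => _ [y _ <-]; apply: vnorm_ge0.
  by exists ((vnorm x)^-1 *: x) => //; apply: vnorm_normalize.
by rewrite -scalemxAr vnormZ ger0_norm ?invr_ge0 ?vnorm_ge0 // ler_pdivlMl // mulrC.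
Qed.

End Norms.

Section OperatorBounds.
Variable R : realType.

Lemma mxdot_mull_le_opnorm {a b c} (A : 'M[R]_(c, a)) (X : 'M[R]_(a, b)) :
  mxdot (A *m X) (A *m X) <= opnorm A ^+ 2 * mxdot X X.
Proof.
rewrite [X in X <= _]mxdot_cols [X in _ * X]mxdot_cols mulr_sumr; apply: ler_sum => j _.
rewrite !colE -mulmxA -colE -!vnorm_sqr -exprMn.
apply: lerXn2r; rewrite ?nnegrE ?vnorm_mulmx_le ?vnorm_ge0 //.
by rewrite mulr_ge0 ?opnorm_ge0 ?vnorm_ge0.
Qed.

Lemma mxdot_mul_le_opnorm {a b} (S : 'M[R]_a) (X : 'M[R]_(a, b)) :
  mxdot X (S *m X) <= opnorm S * mxdot X X.
Proof.
have rhs_ge0 : 0 <= opnorm S * mxdot X X by rewrite mulr_ge0 ?opnorm_ge0 ?mxdot_ge0.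
apply: le_trans (ler_norm _) _; rewrite -ler_sqr ?nnegrE // real_normK ?num_real //.
apply: le_trans (mxdot_cauchy_schwarz _ _) _.
rewrite mulrC exprMn [mxdot X X ^+ 2]expr2 mulrA.
by rewrite ler_wpM2r ?mxdot_ge0 // mxdot_mull_le_opnorm.
Qed.

End OperatorBounds.

Section Contractions.
Variable R : realType.
Variables (n : nat) (Q : 'M[R]_n).
Hypothesis Q_Qbar : Qbar Q.

Lemma Qbar_psd : psd Q.
Proof. by case: Q_Qbar. Qed.

Let Q_sym : Q^T = Q. Proof. by case: Qbar_psd. Qed.

Lemma Qbar_mxdot_le {b} (X : 'M[R]_(n, b)) : mxdot X (Q *m X) <= mxdot X X.
Proof.
apply: le_trans (mxdot_mul_le_opnorm _ _) _; rewrite ler_piMl ?mxdot_ge0 //.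
by case: Q_Qbar.
Qed.

Lemma Qbar_sqr_le_qform (v : 'cV[R]_n) : mxdot (Q *m v) (Q *m v) <= mxdot v (Q *m v).
Proof.
set w := mxdot (Q *m v) (Q *m v).
have w_ge0 : 0 <= w := mxdot_ge0 _.
have qv_ge0 : 0 <= mxdot v (Q *m v) := psd_mxdot_mull_ge0 v Qbar_psd.
have w_sqr_le : w ^+ 2 <= mxdot v (Q *m v) * w.
  have wE : w = mxdot v (Q *m (Q *m v)) by rewrite -{1}Q_sym -mxdot_mull.
  rewrite {1}wE; apply: le_trans (psd_cauchy_schwarz _ _ Qbar_psd) _.
  by rewrite ler_wpM2l //; exact: Qbar_mxdot_le.
have [->|w_neq0] := eqVneq w 0; first by [].
by rewrite expr2 ler_pM2r ?lt_def ?w_neq0 in w_sqr_le.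
Qed.

Lemma psd_1subQ : psd (1%:M - Q).
Proof.
split; first by rewrite /Defs.symmetric linearB /= trmx1 Q_sym.
by move=> v; rewrite qform_mxdot mulmxBl mxdotBr subr_ge0 mul1mx Qbar_mxdot_le.
Qed.

Lemma psd_Q_sub_sqr : psd (Q - Q *m Q).
Proof.
split; first by rewrite /Defs.symmetric linearB /= trmx_mul Q_sym.
move=> v; rewrite qform_mxdot mulmxBl mxdotBr subr_ge0 -mulmxA.
by rewrite -{1}Q_sym -mxdot_mull Qbar_sqr_le_qform.
Qed.

Lemma Qbar_mxdot_mulr_le {a} (X : 'M[R]_(a, n)) : mxdot X (X *m Q) <= mxdot X X.
Proof.
by have := psd_mxdot_mulr_ge0 X psd_1subQ; rewrite mulmxBr mulmx1 mxdotBr subr_ge0.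
Qed.

Lemma Qbar_mxdot_mulr_sqr_le {a} (X : 'M[R]_(a, n)) :
  mxdot (X *m Q) (X *m Q) <= mxdot X (X *m Q).
Proof.
have := psd_mxdot_mulr_ge0 X psd_Q_sub_sqr.
by rewrite mulmxBr mxdotBr subr_ge0 mxdot_mulr Q_sym mulmxA.
Qed.

End Contractions.

Section Estimates.
Variable R : realType.

Lemma mxdot_sum_le {a b} k (Y : nat -> 'M[R]_(a, b)) :
  mxdot (\sum_(j < k) Y j) (\sum_(j < k) Y j) <= k%:R * \sum_(j < k) mxdot (Y j) (Y j).
Proof.
elim: k => [|k IHk]; first by rewrite !big_ord0 mxdot0r mul0r.
rewrite !big_ord_recr /=; set A := \sum_(j < k) Y j; set y := Y k.
have cross_le : 2 * mxdot A y <= \sum_(j < k) mxdot (Y j) (Y j) + k%:R * mxdot y y.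
  have -> : k%:R * mxdot y y = \sum_(j < k) mxdot y y.
    by rewrite sumr_const card_ord mulr_natl.
  rewrite mxdotC mxdot_sumr mulr_sumr -big_split /=.
  apply: ler_sum => j _; have := mxdot_ge0 (Y j - y).
  by rewrite mxdotBl !mxdotBr (mxdotC y (Y j)); lra.
rewrite mxdotDl !mxdotDr (mxdotC y A) -/A -[k.+1]addn1 natrD.
by have := mxdot_ge0 y; lra.
Qed.

Lemma psd_mxdot_addr_le {a b} (X Y : 'M[R]_(a, b)) (Q : 'M[R]_b) : psd Q ->
  mxdot (X + Y) ((X + Y) *m Q) <= 2 * mxdot X (X *m Q) + 2 * mxdot Y (Y *m Q).
Proof.
move/(psd_mxdot_mulr_ge0 (X - Y)).
by rewrite !(mulmxDl, mulNmx, mxdotDl, mxdotNl, mxdotDr, mxdotNr); lra.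
Qed.

End Estimates.

Section Excitation.
Variable R : realType.
Variables (n N : nat) (Q : nat -> 'M[R]_n) (eps : R).
Hypotheses (Q_Qbar : forall k, Qbar (Q k)) (eps_ge0 : 0 <= eps)
  (excitation : eps <= sigma_min (\sum_(k < N) Q k)).

Lemma excitation_qform (v : 'cV[R]_n) :
  eps ^+ 2 * mxdot v v <= N%:R * mxdot v ((\sum_(k < N) Q k) *m v).
Proof.
have eps_v_le : eps * vnorm v <= vnorm ((\sum_(k < N) Q k) *m v).
  by apply: le_trans (sigma_min_le _ v); rewrite ler_wpM2r ?vnorm_ge0.
have := lerXn2r 2 (mulr_ge0 eps_ge0 (vnorm_ge0 v)) (vnorm_ge0 _) eps_v_le.
rewrite exprMn !vnorm_sqr => /le_trans; apply.
rewrite mulmx_suml; apply: le_trans (mxdot_sum_le N (fun k => Q k *m v)) _.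
rewrite mxdot_sumr ler_wpM2l ?ler0n //.
by apply: ler_sum => k _; apply: Qbar_sqr_le_qform.
Qed.

Lemma excitation_mxdot {a} (X : 'M[R]_(a, n)) :
  eps ^+ 2 * mxdot X X <= N%:R * mxdot X (X *m \sum_(k < N) Q k).
Proof.
have -> : mxdot X X = mxdot X (X *m 1%:M) by rewrite mulmx1.
rewrite !mxdot_rows !mulr_sumr; apply: ler_sum => i _.
by rewrite !qform_mxdot mul1mx excitation_qform.
Qed.

Lemma excitation_le_horizon : (0 < n)%N -> eps ^+ 2 <= N%:R ^+ 2.
Proof.
move=> n_gt0; pose X : 'M[R]_(1, n) := delta_mx 0 (Ordinal n_gt0).
have XX1 : mxdot X X = 1 by rewrite -mxdot_trmx trmx_delta mxdot_delta mxE !eqxx.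
have := excitation_mxdot X; rewrite XX1 mulr1 => /le_trans; apply.
rewrite expr2 ler_wpM2l ?ler0n // mulmx_sumr mxdot_sumr.
have -> : N%:R = \sum_(k < N) (1 : R) by rewrite sumr_const card_ord.
by apply: ler_sum => k _; rewrite -XX1 Qbar_mxdot_mulr_le.
Qed.

End Excitation.

Section Lyapunov.
Variable R : realType.

Lemma lyapunov_shift {p} (H Om : 'M[R]_p) :
  (H + 1%:M)^T *m Om *m (H + 1%:M) - Om = - 1%:M ->
  Om *m H + H^T *m Om = - (H^T *m Om *m H) - 1%:M.
Proof.
rewrite [(H + 1%:M)^T]linearD /= trmx1 !(mulmxDl, mulmxDr, mul1mx, mulmx1).
move=> /matrixP lyap.
by apply/matrixP => i j; move: (lyap i j); rewrite !mxE; lra.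
Qed.

Lemma lyapunov_step {p n} (Om H : 'M[R]_p) (Q : 'M[R]_n) (E : 'M[R]_(p, n)) :
  Om^T = Om -> Q^T = Q ->
  Om *m H + H^T *m Om = - (H^T *m Om *m H) - 1%:M ->
  mxdot (E + H *m E *m Q) (Om *m (E + H *m E *m Q)) =
  mxdot E (Om *m E) - mxdot E (H^T *m Om *m H *m E *m (Q - Q *m Q))
    - mxdot E (E *m Q).
Proof.
move=> Om_sym Q_sym lyap; set K := H^T *m Om *m H.
have cross : mxdot E (Om *m (H *m E *m Q)) + mxdot (H *m E *m Q) (Om *m E) =
    - mxdot E (K *m E *m Q) - mxdot E (E *m Q).
  rewrite mxdot_mulr mxdot_mull Q_sym !mulmxA -mxdotDr -!mulmxDl lyap.
  by rewrite !(mulmxBl, mulNmx, mul1mx, mxdotBr, mxdotNr).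
have quad : mxdot (H *m E *m Q) (Om *m (H *m E *m Q)) = mxdot E (K *m E *m Q *m Q).
  by rewrite mxdot_mulr mxdot_mull Q_sym !mulmxA.
rewrite mulmxDr !mxdotDl !mxdotDr quad mulmxBr mxdotBr [K *m E *m (Q *m Q)]mulmxA.
lra.
Qed.

Lemma lyapunov_decrease {p n} (Om H : 'M[R]_p) (Q : 'M[R]_n) (E : 'M[R]_(p, n)) :
  psd Om -> Qbar Q ->
  Om *m H + H^T *m Om = - (H^T *m Om *m H) - 1%:M ->
  mxdot (E + H *m E *m Q) (Om *m (E + H *m E *m Q)) <=
  mxdot E (Om *m E) - mxdot E (E *m Q).
Proof.
move=> Om_psd Q_Qbar lyap; have [Om_sym _] := Om_psd.
have [Q_sym _] := Qbar_psd Q_Qbar; rewrite lyapunov_step //.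
suff : 0 <= mxdot E (H^T *m Om *m H *m E *m (Q - Q *m Q)) by lra.
have -> : mxdot E (H^T *m Om *m H *m E *m (Q - Q *m Q)) =
    \tr ((H *m E)^T *m Om *m (H *m E) *m (Q - Q *m Q)).
  by rewrite /mxdot trmx_mul !mulmxA.
by apply: mxtrace_mul_psd_ge0; [exact: psd_congr | exact: psd_Q_sub_sqr].
Qed.

End Lyapunov.

Section Arithmetic.
Variable R : realType.

Lemma delta_mul_le (eps : R) (N n : nat) : (1 <= N)%N -> (1 <= n)%N ->
  eps ^+ 2 <= N%:R ^+ 2 -> delta eps N n * (4 * N%:R ^+ 3) <= eps ^+ 2.
Proof.
move=> N_ge1 n_ge1 eps_le_N; rewrite /delta.
have c_ge1 : 1 <= N%:R ^+ 3 :> R by rewrite exprn_ege1 ?ler1n.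
have m_ge1 : 1 <= n%:R ^+ 4 :> R by rewrite exprn_ege1 ?ler1n.
rewrite mulrAC ler_pdivrMr ?mulr_gt0 ?exprn_gt0 ?ltr0n //.
have -> : eps ^+ 4 = eps ^+ 2 * eps ^+ 2 by rewrite -exprD.
have -> : N%:R ^+ 8 = N%:R ^+ 2 * (N%:R ^+ 3 * N%:R ^+ 3) :> R by rewrite -!exprD.
move: (sqr_ge0 eps) eps_le_N c_ge1 m_ge1.
move: (eps ^+ 2) (N%:R ^+ 2 : R) (N%:R ^+ 3 : R) (n%:R ^+ 4 : R) => a b c m a_ge0 ab c1 m1.
have abc : a * a * c <= a * b * c by rewrite ler_wpM2r ?ler_wpM2l //; lra.
have abc_ge0 : 0 <= a * b * c by rewrite !mulr_ge0 //; lra.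
have : a * b * c <= a * b * c * (c * m) by rewrite ler_peMr // mulr_ege1.
have -> : a * (16 * (b * (c * c)) * m) = 16 * (a * b * c * (c * m)) by ring.
lra.
Qed.

Lemma contraction_of_decrease (d s M e S V0 VN : R) :
  0 <= d -> 0 <= s -> 0 < M -> 0 <= S -> 0 <= V0 ->
  VN <= V0 - S -> V0 <= s * e -> d * e <= M * S ->
  VN <= (1 - d / (s * M)) * V0.
Proof.
move=> d_ge0 s_ge0 M_gt0 S_ge0 V0_ge0 VN_le V0_le de_le.
have [s0|s_neq0] := eqVneq s 0.
  have V0_eq0 : V0 = 0 by apply/eqP; rewrite eq_le V0_ge0 andbT -(mul0r e) -s0.
  by rewrite V0_eq0 mulr0; lra.
have s_gt0 : 0 < s by rewrite lt_def s_neq0.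
suff : d / (s * M) * V0 <= S by rewrite mulrBl mul1r; lra.
apply: le_trans (_ : d / (s * M) * (s * e) <= _).
  by rewrite ler_wpM2l // divr_ge0 // mulr_ge0 // ltW.
have -> : d / (s * M) * (s * e) = d * e / M by field; rewrite (gt_eqF M_gt0) s_neq0.
by rewrite ler_pdivrMr // [S * M]mulrC.
Qed.

End Arithmetic.

Section Vectorization.
Variable R : realType.

(* [x] stacks the [n]-dimensional states of the [p] agents (the layout of [tensmx]);
   [unvec x] has these states as its rows. *)
Definition unvec {p n} (x : 'cV[R]_(p * n)) : 'M[R]_(p, n) :=
  \matrix_(i, j) x (mxtens_index (i, j)) 0.

Lemma sum_mxtens_index {p n} (F : 'I_(p * n) -> R) :
  \sum_k F k = \sum_i \sum_j F (mxtens_index (i, j)).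
Proof.
rewrite (reindex (@mxtens_index p n)) /=; last first.
  by exists (@mxtens_unindex p n) => k _; [apply: mxtens_indexK | apply: mxtens_unindexK].
by rewrite pair_big /=; apply: eq_bigr => -[i j] _.
Qed.

Lemma unvec_tensmx_mul {p n} (A : 'M[R]_p) (B : 'M[R]_n) x :
  unvec ((A *t B) *m x) = A *m unvec x *m B^T.
Proof.
apply/matrixP => i j; rewrite !mxE sum_mxtens_index.
under eq_bigr do under eq_bigr do rewrite tensmxE.
rewrite exchange_big /=; apply: eq_bigr => b _.
by rewrite !mxE big_distrl /=; apply: eq_bigr => a _; rewrite !mxE mulrAC.
Qed.

Lemma unvecD {p n} (x y : 'cV[R]_(p * n)) : unvec (x + y) = unvec x + unvec y.
Proof. by apply/matrixP => i j; rewrite !mxE. Qed.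

Lemma unvecB {p n} (x y : 'cV[R]_(p * n)) : unvec (x - y) = unvec x - unvec y.
Proof. by apply/matrixP => i j; rewrite !mxE. Qed.

Lemma Vfun_unvec {p n} (Om : 'M[R]_p) (x : 'cV[R]_(p * n)) :
  Vfun Om x = mxdot (unvec x) (Om *m unvec x).
Proof.
have -> : Om *m unvec x = unvec ((Om *t 1%:M) *m x).
  by rewrite unvec_tensmx_mul trmx1 mulmx1.
rewrite /Vfun qform_mxdot !mxdotE sum_mxtens_index.
by apply: eq_bigr => i _; apply: eq_bigr => j _; rewrite big_ord1 !mxE.
Qed.

End Vectorization.

Lemma interconnection_mul_ones (R : realType) p (L : 'M[R]_p) :
  interconnection L -> L *m ones R p = ones R p.
Proof.
move=> [_ L_rows]; apply/matrixP => i j; rewrite !mxE -[RHS](L_rows i).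
by apply: eq_bigr => k _; rewrite !mxE mulr1.
Qed.

Section Trajectory.
Variable R : realType.
Variables (p n : nat) (L : 'M[R]_p) (r : 'cV[R]_p) (Q : nat -> 'M[R]_n).
Variable x0 : 'cV[R]_(p * n).
Hypotheses (L_ones : L *m ones R p = ones R p) (r_L : r^T *m L = r^T)
  (r_ones : r^T *m ones R p = 1%:M) (Q_sym : forall k, (Q k)^T = Q k).

Let xbar := tensmx (ones R p *m r^T) (1%:M : 'M[R]_n) *m x0.

Lemma traj_err_succ k :
  unvec (traj L Q x0 k.+1 - xbar) =
  unvec (traj L Q x0 k - xbar) + (L - 1%:M) *m unvec (traj L Q x0 k - xbar) *m Q k.
Proof.
have F_xbar : (L - 1%:M) *m unvec xbar = 0.
  by rewrite unvec_tensmx_mul trmx1 mulmx1 !mulmxA mulmxBl L_ones mul1mx subrr !mul0mx.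
rewrite /= mulmxDl mul1mx !unvecB unvecD unvec_tensmx_mul Q_sym.
by rewrite [in RHS]mulmxBr F_xbar subr0 addrAC.
Qed.

Lemma r_traj_err k : r^T *m unvec (traj L Q x0 k - xbar) = 0.
Proof.
elim: k => [|k IHk].
  by rewrite /= unvecB unvec_tensmx_mul trmx1 mulmx1 mulmxBr !mulmxA r_ones mul1mx subrr.
by rewrite traj_err_succ mulmxDr IHk add0r !mulmxA mulmxBr r_L mulmx1 subrr !mul0mx.
Qed.

End Trajectory.

Section ErrorDynamics.
Variable R : realType.
Variables (p n N : nat) (L Om : 'M[R]_p) (r : 'cV[R]_p).
Variables (Q : nat -> 'M[R]_n) (E : nat -> 'M[R]_(p, n)).
Hypotheses (Om_psd : psd Om)
  (lyap : (L - ones R p *m r^T)^T *m Om *m (L - ones R p *m r^T) - Om = - 1%:M)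
  (Q_Qbar : forall k, Qbar (Q k))
  (r_E : forall k, r^T *m E k = 0)
  (E_succ : forall k, E k.+1 = E k + (L - 1%:M) *m E k *m Q k).

Let s k := mxdot (E k) (E k *m Q k).
Let S := \sum_(j < N) s j.
Let ell := opnorm (L - 1%:M).

Let s_ge0 k : 0 <= s k.
Proof. exact/psd_mxdot_mulr_ge0/Qbar_psd. Qed.

Let S_ge0 : 0 <= S.
Proof. exact: sumr_ge0. Qed.

Lemma err_V_succ_le k :
  mxdot (E k.+1) (Om *m E k.+1) <= mxdot (E k) (Om *m E k) - s k.
Proof.
(* Since [r^T E k = 0], [L - 1] acts on [E k] as the [H] of the Lyapunov equation. *)
set H := L - ones R p *m r^T - 1%:M; rewrite E_succ.
have -> : (L - 1%:M) *m E k = H *m E k.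
  by rewrite /H !mulmxBl -[ones R p *m _ *m _]mulmxA r_E mulmx0 subr0.
apply: lyapunov_decrease => //.
by apply: lyapunov_shift; rewrite subrK.
Qed.

Lemma err_V_le k : mxdot (E k) (Om *m E k) <= mxdot (E 0) (Om *m E 0) - \sum_(j < k) s j.
Proof.
elim: k => [|k IHk]; first by rewrite big_ord0 subr0.
by rewrite big_ord_recr /=; apply: le_trans (err_V_succ_le k) _; lra.
Qed.

Lemma err_drift k : E k - E 0 = \sum_(j < k) (L - 1%:M) *m E j *m Q j.
Proof.
elim: k => [|k IHk]; first by rewrite big_ord0 subrr.
by rewrite big_ord_recr /= -IHk E_succ addrAC.
Qed.

Lemma err_drift_le k : (k <= N)%N ->
  mxdot (E 0 - E k) (E 0 - E k) <= N%:R * (ell ^+ 2 * S).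
Proof.
move=> le_k_N; rewrite -opprB mxdotNl mxdotNr opprK err_drift.
apply: le_trans (mxdot_sum_le k (fun j => (L - 1%:M) *m E j *m Q j)) _.
have sum_le :
    \sum_(j < k) mxdot ((L - 1%:M) *m E j *m Q j) ((L - 1%:M) *m E j *m Q j) <= ell ^+ 2 * S.
  apply: le_trans (_ : \sum_(j < k) ell ^+ 2 * s j <= _).
    apply: ler_sum => j _; rewrite -mulmxA; apply: le_trans (mxdot_mull_le_opnorm _ _) _.
    by rewrite ler_wpM2l ?sqr_ge0 //; apply: Qbar_mxdot_mulr_sqr_le.
  rewrite -mulr_sumr ler_wpM2l ?sqr_ge0 // /S -!(big_mkord xpredT).
  by rewrite (big_cat_nat (leq0n k) le_k_N) /= lerDl sumr_ge0.
apply: le_trans (_ : k%:R * (ell ^+ 2 * S) <= _); first by rewrite ler_wpM2l ?ler0n.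
by rewrite ler_wpM2r ?ler_nat // mulr_ge0 ?sqr_ge0.
Qed.

Lemma err_excitation_le :
  mxdot (E 0) (E 0 *m \sum_(k < N) Q k) <= 2 * S + 2 * N%:R ^+ 2 * (ell ^+ 2 * S).
Proof.
have term_le (k : 'I_N) :
    mxdot (E 0) (E 0 *m Q k) <= 2 * s k + 2 * (N%:R * (ell ^+ 2 * S)).
  rewrite -[E 0](subrK (E k)) addrC.
  apply: le_trans (psd_mxdot_addr_le _ _ (Qbar_psd (Q_Qbar k))) _.
  have := Qbar_mxdot_mulr_le (Q_Qbar k) (E 0 - E k).
  have := err_drift_le (ltnW (ltn_ord k)); rewrite /s; lra.
rewrite mulmx_sumr mxdot_sumr; apply: le_trans (ler_sum _ (fun k _ => term_le k)) _.
rewrite big_split /= -mulr_sumr sumr_const card_ord -mulr_natl -/S; lra.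
Qed.

Lemma err_energy_le (eps : R) : (1 <= N)%N -> 0 <= eps ->
  eps <= sigma_min (\sum_(k < N) Q k) ->
  eps ^+ 2 * mxdot (E 0) (E 0) <= 4 * N%:R ^+ 3 * (Num.max 1 (ell ^+ 2) * S).
Proof.
move=> N_ge1 eps_ge0 excit; set M := Num.max 1 (ell ^+ 2); set Nr := N%:R : R.
apply: le_trans (excitation_mxdot Q_Qbar eps_ge0 excit (E 0)) _.
apply: le_trans (ler_wpM2l (ler0n _ N) err_excitation_le) _; rewrite -/Nr.
have S_le : S <= M * S by rewrite ler_peMl // le_max lexx.
have NS_le : Nr * S <= Nr ^+ 3 * (M * S).
  apply: le_trans (_ : Nr ^+ 3 * S <= _); last by rewrite ler_wpM2l ?exprn_ge0.
  by rewrite ler_wpM2r // exprSr ler_peMl ?exprn_ege1 ?ler1n.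
have ellS_le : Nr ^+ 3 * (ell ^+ 2 * S) <= Nr ^+ 3 * (M * S).
  by rewrite ler_wpM2l ?exprn_ge0 ?ler_wpM2r // le_max lexx orbT.
have -> : Nr * (2 * S + 2 * Nr ^+ 2 * (ell ^+ 2 * S)) =
    2 * (Nr * S) + 2 * (Nr ^+ 3 * (ell ^+ 2 * S)) by ring.
lra.
Qed.

Lemma err_contraction (eps : R) : (0 < n)%N -> (1 <= N)%N -> 0 < eps ->
  eps <= sigma_min (\sum_(k < N) Q k) ->
  mxdot (E N) (Om *m E N) <= (1 - delta eps N n / rho L Om) * mxdot (E 0) (Om *m E 0).
Proof.
move=> n_gt0 N_ge1 eps_gt0 excit; rewrite /rho /sigma_max -/ell.
have N3_gt0 : 0 < 4 * N%:R ^+ 3 :> R by rewrite mulr_gt0 // exprn_gt0 // ltr0n.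
apply: (contraction_of_decrease (e := mxdot (E 0) (E 0)) (S := S)).
- rewrite /delta; apply: divr_ge0; first exact: exprn_ge0 (ltW eps_gt0).
  by rewrite !mulr_ge0 ?exprn_ge0 ?ler0n.
- exact: opnorm_ge0.
- by rewrite (lt_le_trans ltr01) // le_max lexx.
- exact: S_ge0.
- exact: psd_mxdot_mull_ge0.
- exact: err_V_le.
- exact: mxdot_mul_le_opnorm.
rewrite -(ler_pM2r N3_gt0) mulrAC [_ * S * _]mulrC.
apply: le_trans (err_energy_le N_ge1 (ltW eps_gt0) excit).
rewrite ler_wpM2r ?mxdot_ge0 // delta_mul_le //.
exact: excitation_le_horizon Q_Qbar (ltW eps_gt0) excit n_gt0.
Qed.

End ErrorDynamics.

Unset Implicit Arguments.

Theorem theorem11 (R : realType) (n p N : nat) (eps : R)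
  (L : 'M[R]_p) (r : 'cV[R]_p) (Om : 'M[R]_p) :
  0 < eps -> (1 <= N)%N ->
  connected_ic L ->
  r^T *m L = r^T -> r^T *m ones R p = 1%:M ->
  posdef Om ->
  (L - ones R p *m r^T)^T *m Om *m (L - ones R p *m r^T) - Om = - 1%:M ->
  forall Q : nat -> 'M[R]_n,
    (forall k, Qbar (Q k)) ->
    eps <= sigma_min (\sum_(k < N) Q k) ->
    forall x0 : 'cV[R]_(p * n),
      let xbar := tensmx (ones R p *m r^T) (1%:M : 'M[R]_n) *m x0 in
      Vfun Om (traj L Q x0 N - xbar)
        <= (1 - delta eps N n / rho L Om) * Vfun Om (x0 - xbar).
Proof.
(* Connectivity only ensures that [r] and [Om] exist; here they are given. *)
move=> eps_gt0 N_ge1 [L_ic _] r_L r_ones /posdef_psd Om_psd lyap Q Q_Qbar excit x0.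
cbv zeta; set xbar := tensmx _ _ *m x0; rewrite !Vfun_unvec.
have [n0|n_gt0] := posnP n.
  by subst n; rewrite !(thinmx0 (unvec _)) !mulmx0 !mxdot0r mulr0.
have Q_sym k : (Q k)^T = Q k by case: (Qbar_psd (Q_Qbar k)).
have L_ones := interconnection_mul_ones L_ic.
apply: (@err_contraction _ _ _ _ L Om r Q (fun k => unvec (traj L Q x0 k - xbar))) => //.
- exact: r_traj_err.
- exact: traj_err_succ.
Qed.
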